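(* Let $\mathcal{M}$ be a metric space on $\omega$ with completion $\mathcal{C}(\mathcal{M})$, and let $\bar a,\bar b$ be tuples of elements of $\mathcal{C}(\mathcal{M})$ of the same length. For every ordinal $\alpha$ and every $f\in\mathrm{REC}$, if $\bar a\sim_\alpha\bar b$ then $\bar a\sim^f_\alpha\bar b$. Consequently $\mathrm{SR}(\bar a,\bar b)\le \mathrm{R}(\bar a,\bar b)$.
   Context: $\mathcal{C}(\mathcal{M})$ is a structure in the language $\mathscr{U}=\{\dot d_q,\dot d^q:q\in\mathbb{Q}^+\}$, $\dot d_q(x,y)\Leftrightarrow d(x,y)<q$, $\dot d^q(x,y)\Leftrightarrow d(x,y)>q$. Back-and-forth relations in $\mathcal{C}(\mathcal{M})$: $\bar a\sim_0\bar b$ iff $a_i\mapsto b_i$ is a partial $\mathscr{U}$-isomorphism; $\bar a\sim_{\alpha+1}\bar b$ iff for every $a\in\mathcal{C}(\mathcal{M})$ there is $b$ with $\bar a a\sim_\alpha\bar b b$ and conversely; at limits take intersections; $\mathrm{SR}(\bar a,\bar b)$ is the least $\mu$ with $\neg(\bar a\sim_\mu\bar b)$, or $\infty$. $\mathrm{REC}$ is the set of recursive, strictly decreasing $f:\omega\to\mathbb{Q}^+$ converging to $0$. For $f\in\mathrm{REC}$, tuples $\bar a=(a_0,\dots,a_{p-1})$, $\bar b=(b_0,\dots,b_{p-1})$ from $\mathcal{C}(\mathcal{M})$ and an ordinal $\alpha$, the game $G^{f,\bar a,\bar b}_\alpha$ is played as follows: at move $i=0,1,2,\dots$, Player 1 plays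 an ordinal $\alpha_i$ with $\alpha_0<\alpha$ and $\alpha_i<\alpha_{i-1}$ for $i>0$, together with an element of $\mathcal{M}$ (i.e. a natural number): if $i$ is even Player 1 plays $c_i\in\mathcal{M}$ and Player 2 responds with $d_i\in\mathcal{M}$; if $i$ is odd Player 1 plays $d_i\in\mathcal{M}$ and Player 2 responds with $c_i\in\mathcal{M}$. The game ends after Player 2 responds to the move at which Player 1 plays $\alpha_{k-1}=0$. Player 2 wins iff (I) for all $i<p$, $j<k$: $|d(a_i,c_j)-d(b_i,d_j)|<f(j)$, and (II) for all $i,j<k$: $|d(c_i,c_j)-d(d_i,d_j)|<f(i)+f(j)$, distances computed in $\mathcal{C}(\mathcal{M})$. $\bar a\sim^f_\alpha\bar b$ means Player 2 has a winning strategy in $G^{f,\bar a,\bar b}_\alpha$. $\mathrm{R}(\bar a,\bar b)$ is the least ordinal $\mu$ such that $\neg(\bar a\sim^f_\mu\bar b)$ for some $f\in\mathrm{REC}$, or $\infty$ if there is none. *)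

From Stdlib Require Import Reals QArith Qabs Qreals List.
Import ListNotations.
Set Implicit Arguments.

Inductive rcode : Type :=
| RZero | RSucc | RProj (i : nat) | RComp (h : rcode) (gs : list rcode)
| RPrec (g h : rcode) | RMu (g : rcode).

Inductive reval : rcode -> list nat -> nat -> Prop :=
| re_zero xs : reval RZero xs 0
| re_succ x xs : reval RSucc (x :: xs) (S x)
| re_proj i xs : (i < length xs)%nat -> reval (RProj i) xs (nth i xs 0%nat)
| re_comp h gs xs ys y : revals gs xs ys -> reval h ys y -> reval (RComp h gs) xs y
| re_prec0 g h xs y : reval g xs y -> reval (RPrec g h) (0%nat :: xs) y
| re_precS g h n xs r y : reval (RPrec g h) (n :: xs) r ->
    reval h (n :: r :: xs) y -> reval (RPrec g h) (S n :: xs) y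
| re_mu g xs n : reval g (n :: xs) 0%nat ->
    (forall m, (m < n)%nat -> exists k, reval g (m :: xs) (S k)) -> reval (RMu g) xs n
with revals : list rcode -> list nat -> list nat -> Prop :=
| res_nil xs : revals nil xs nil
| res_cons g gs xs y ys : reval g xs y -> revals gs xs ys -> revals (g :: gs) xs (y :: ys).

Definition recursive_nat (g : nat -> nat) : Prop :=
  exists c, forall n, reval c [n] (g n).

Definition recursive_Q (f : nat -> Q) : Prop :=
  exists g1 g2, recursive_nat g1 /\ recursive_nat g2 /\
    forall n, (f n == Z.of_nat (g1 n) # Pos.of_succ_nat (g2 n))%Q.

Definition REC (f : nat -> Q) : Prop :=
  recursive_Q f /\
  (forall n, 0 < f n)%Q /\
  (forall m n, (m < n)%nat -> (f n < f m)%Q) /\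
  (forall eps, (0 < eps)%Q -> exists N, forall n, (N <= n)%nat -> (Qabs (f n) < eps)%Q).

Definition is_metric (X : Type) (dist : X -> X -> R) : Prop :=
  (forall x y, 0 <= dist x y)%R /\ (forall x y, dist x y = 0%R <-> x = y) /\
  (forall x y, dist x y = dist y x) /\
  (forall x y z, dist x z <= dist x y + dist y z)%R.

Definition cauchy_seq (X : Type) (dist : X -> X -> R) (u : nat -> X) : Prop :=
  forall eps, (0 < eps)%R -> exists N, forall m n, (N <= m)%nat -> (N <= n)%nat ->
    (dist (u m) (u n) < eps)%R.

Definition converges_to (X : Type) (dist : X -> X -> R) (u : nat -> X) (l : X) : Prop :=
  forall eps, (0 < eps)%R -> exists N, forall n, (N <= n)%nat -> (dist (u n) l < eps)%R.

Definition is_completion (d : nat -> nat -> R) (C : Type) (dC : C -> C -> R) (e : nat -> C) : Prop :=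
  is_metric dC /\
  (forall x y, dC (e x) (e y) = d x y) /\
  (forall x eps, (0 < eps)%R -> exists n, (dC x (e n) < eps)%R) /\
  (forall u, cauchy_seq dC u -> exists l, converges_to dC u l).

(* Ordinals: represented inside an arbitrary strict well-order (O, lt). *)
Definition strict_total_order (O : Type) (lt : O -> O -> Prop) : Prop :=
  (forall x y z, lt x y -> lt y z -> lt x z) /\
  (forall x, ~ lt x x) /\
  (forall x y, lt x y \/ x = y \/ lt y x).

Definition is_zero (O : Type) (lt : O -> O -> Prop) (g : O) : Prop := forall b, ~ lt b g.

Section BF.
Variables (C : Type) (dC : C -> C -> R).

(* a_i |-> b_i is a partial U-isomorphism, U = {d_q, d^q : q in Q^+} *)
Definition partial_iso (a b : list C) : Prop :=
  length a = length b /\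
  forall i j ai aj bi bj, nth_error a i = Some ai -> nth_error a j = Some aj ->
    nth_error b i = Some bi -> nth_error b j = Some bj ->
    (ai = aj <-> bi = bj) /\
    forall q : Q, (0 < q)%Q ->
      ((dC ai aj < Q2R q)%R <-> (dC bi bj < Q2R q)%R) /\
      ((dC ai aj > Q2R q)%R <-> (dC bi bj > Q2R q)%R).

Definition back_forth (S : list C -> list C -> Prop) (a b : list C) : Prop :=
  (forall c, exists d, S (a ++ [c]) (b ++ [d])) /\
  (forall d, exists c, S (a ++ [c]) (b ++ [d])).

Variables (O : Type) (lt : O -> O -> Prop).

Definition bf_step (al : O) (rec : forall be, lt be al -> list C -> list C -> Prop)
  (a b : list C) : Prop :=
  (* al = 0 *)
  ((forall be, ~ lt be al) -> partial_iso a b) /\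
  (* al = be + 1 *)
  (forall be (h : lt be al), (forall g, lt g al -> ~ lt be g) -> back_forth (rec be h) a b) /\
  (* al limit *)
  ((exists be, lt be al) -> (forall be, lt be al -> exists g, lt be g /\ lt g al) ->
     forall be (h : lt be al), rec be h a b).

Definition bf_rel (wf : well_founded lt) : O -> list C -> list C -> Prop :=
  Fix wf (fun _ => list C -> list C -> Prop) bf_step.

(* The game G^{f,a,b}_al.  Player 1's moves are pairs (al_i, x_i) with
   x_i in M = omega; a strategy of Player 2 maps the previous moves of
   Player 1 and the current move to the response. *)
Variables (e : nat -> C).

Definition complete_play (al : O) (ms : list (O * nat)) : Prop :=
  ms <> nil /\
  (forall g, hd_error (map fst ms) = Some g -> lt g al) /\
  (forall i g g', nth_error (map fst ms) i = Some g ->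
     nth_error (map fst ms) (S i) = Some g' -> lt g' g) /\
  (forall g, nth_error (map fst ms) (length ms - 1) = Some g -> is_zero lt g).

(* the pairs (c_i, d_i) produced when Player 2 follows sigma *)
Fixpoint cd_aux (sigma : list (O * nat) -> O * nat -> nat)
  (pre rest : list (O * nat)) (i : nat) : list (nat * nat) :=
  match rest with
  | nil => nil
  | m :: rest' =>
      let y := sigma pre m in
      (if Nat.even i then (snd m, y) else (y, snd m))
        :: cd_aux sigma (pre ++ [m]) rest' (S i)
  end.

Definition cd_of sigma ms := cd_aux sigma nil ms 0.

Definition p2_wins (f : nat -> Q) (a b : list C) (cds : list (nat * nat)) : Prop :=
  (forall i j ai bi c d, nth_error a i = Some ai -> nth_error b i = Some bi ->
     nth_error cds j = Some (c, d) ->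
     (Rabs (dC ai (e c) - dC bi (e d)) < Q2R (f j))%R) /\
  (forall i j ci di cj dj, nth_error cds i = Some (ci, di) ->
     nth_error cds j = Some (cj, dj) ->
     (Rabs (dC (e ci) (e cj) - dC (e di) (e dj)) < Q2R (f i) + Q2R (f j))%R).

Definition sim_f (f : nat -> Q) (al : O) (a b : list C) : Prop :=
  exists sigma : list (O * nat) -> O * nat -> nat,
    forall ms, complete_play al ms -> p2_wins f a b (cd_of sigma ms).

End BF.

(* least element satisfying P, or None (= infinity) if there is none *)
Definition least_opt (O : Type) (lt : O -> O -> Prop) (P : O -> Prop) (m : option O) : Prop :=
  match m with
  | Some mu => P mu /\ forall nu, P nu -> ~ lt nu mu
  | None => forall mu, ~ P mu
  end.

Definition ole_opt (O : Type) (lt : O -> O -> Prop) (m1 m2 : option O) : Prop :=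
  match m1, m2 with
  | _, None => True
  | None, Some _ => False
  | Some x, Some y => ~ lt y x
  end.

Definition SR_is C dC O lt (wf : well_founded lt) (a b : list C) (m : option O) : Prop :=
  least_opt lt (fun mu => ~ @bf_rel C dC O lt wf mu a b) m.

Definition R_is C dC (e : nat -> C) O lt (a b : list C) (m : option O) : Prop :=
  least_opt lt (fun mu => exists f, REC f /\ ~ @sim_f C dC O lt e f mu a b) m.

(* Player 2 wins G^f_α by secretly playing the back-and-forth game for ~ in the
   completion.  Alongside the play it keeps shadow points c'_0, d'_0, ... of C(M)
   with ā c̄' ~_(α_i) b̄ d̄' after move i.  Since ~ is antitone in the ordinal, the
   relation ~_(α_(i-1)) has the back-and-forth property for ~_(α_i), which
   supplies the shadow partner of Player 1's move; Player 2 then answers with a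
   point of the dense set M within f(i) of that shadow point.  When α_k = 0 the
   shadow tuples are partially U-isomorphic, hence (rationals being dense in the
   reals) have equal distances, and the triangle inequality bounds the errors by
   f(j) and f(i) + f(j).  As ~_α implies ~^f_α for every f, SR <= R. *)

From Stdlib Require Import Reals QArith Qreals List Lra Lia.
From Stdlib Require Import Classical ClassicalEpsilon FunctionalExtensionality.
Import ListNotations.
Open Scope R_scope.
Set Implicit Arguments.

Lemma nth_error_app_some_l {T : Type} {l : list T} (l' : list T) {n : nat} {x : T} :
  nth_error l n = Some x -> nth_error (l ++ l') n = Some x.
Proof.
  intro H. rewrite nth_error_app1; [exact H|]. apply nth_error_Some. congruence.
Qed.

Lemma nth_error_app_map_shift {T U : Type} (l : list U) (g : T -> U)
  {s : list T} {j : nat} {t : T} :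
  nth_error s j = Some t -> nth_error (l ++ map g s) (length l + j) = Some (g t).
Proof.
  intro H. rewrite nth_error_app2 by lia.
  replace (length l + j - length l)%nat with j by lia.
  rewrite nth_error_map, H. reflexivity.
Qed.

Lemma Q2R_pos (q : Q) : (0 < q)%Q -> 0 < Q2R q.
Proof. intro Hq. apply Qlt_Rlt in Hq. unfold Q2R in Hq at 1. simpl in Hq. lra. Qed.

Lemma exists_Q2R_between (x y : R) : x < y -> exists q : Q, x < Q2R q < y.
Proof.
  intros Hxy.
  destruct (archimed (/ (y - x))) as [Hn _].
  set (n := up (/ (y - x))) in *.
  assert (Hinv : 0 < / (y - x)) by (apply Rinv_0_lt_compat; lra).
  assert (Hn_pos : 0 < IZR n) by lra.
  assert (Hn_posZ : (0 < n)%Z) by (apply lt_0_IZR; exact Hn_pos).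
  destruct (archimed (x * IZR n)) as [Hk1 Hk2].
  set (k := up (x * IZR n)) in *.
  exists (k # Z.to_pos n).
  unfold Q2R; simpl. rewrite Z2Pos.id by exact Hn_posZ.
  assert (Hgap : IZR n * (y - x) > 1).
  { apply Rmult_lt_reg_r with (/ (y - x)); [exact Hinv|].
    rewrite Rmult_assoc, Rinv_r by lra. lra. }
  split; apply Rmult_lt_reg_r with (IZR n); try exact Hn_pos;
    rewrite Rmult_assoc, Rinv_l by lra; nra.
Qed.

Lemma Req_of_Q2R_upper_bounds (x y : R) : 0 <= x -> 0 <= y ->
  (forall q : Q, (0 < q)%Q -> (x < Q2R q <-> y < Q2R q)) -> x = y.
Proof.
  intros Hx Hy Hxy.
  assert (Hpos : forall z q, 0 <= z -> z < Q2R q -> (0 < q)%Q).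
  { intros z q Hz Hq. apply Rlt_Qlt. unfold Q2R at 1; simpl. lra. }
  destruct (Rtotal_order x y) as [Hlt|[Heq|Hlt]]; [|exact Heq|].
  - destruct (exists_Q2R_between Hlt) as [q [H1 H2]].
    apply (Hxy q (Hpos x q Hx H1)) in H1. lra.
  - destruct (exists_Q2R_between Hlt) as [q [H1 H2]].
    apply (Hxy q (Hpos y q Hy H1)) in H1. lra.
Qed.

Section Metric.
Variables (X : Type) (dist : X -> X -> R).
Hypothesis Hdist : is_metric dist.

Lemma metric_dist_diff_le (x y x' y' : X) :
  Rabs (dist x y - dist x' y') <= dist x x' + dist y y'.
Proof.
  destruct Hdist as [_ [_ [Hsym Htri]]].
  pose proof (Htri x x' y). pose proof (Htri x' y' y). pose proof (Htri x' x y').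
  pose proof (Htri x y y'). rewrite (Hsym x' x), (Hsym y' y) in *.
  apply Rabs_le; lra.
Qed.

Lemma metric_dist_transfer {x y x' y' : X} (u v u' v' : X) : dist x y = dist x' y' ->
  Rabs (dist u v - dist u' v') <= dist x u + dist y v + dist x' u' + dist y' v'.
Proof.
  intros Heq.
  pose proof (metric_dist_diff_le x y u v).
  pose proof (metric_dist_diff_le x' y' u' v').
  replace (dist u v - dist u' v')
    with (- (dist x y - dist u v) + (dist x' y' - dist u' v')) by (rewrite Heq; ring).
  eapply Rle_trans; [apply Rabs_triang|]. rewrite Rabs_Ropp. lra.
Qed.

End Metric.

Section Ordinals.
Variables (O : Type) (lt : O -> O -> Prop).

Definition is_pred (be al : O) : Prop := lt be al /\ forall g, lt g al -> ~ lt be g.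

Definition is_limit (al : O) : Prop :=
  (exists be, lt be al) /\ forall be, lt be al -> exists g, lt be g /\ lt g al.

Lemma ordinal_cases (al : O) :
  is_zero lt al \/ (exists be, is_pred be al) \/ is_limit al.
Proof.
  destruct (classic (is_zero lt al)) as [Hz|Hz]; [left; exact Hz|right].
  assert (Hex : exists be, lt be al).
  { apply NNPP; intro Hno; apply Hz; intros be Hbe; apply Hno; eauto. }
  destruct (classic (forall be, lt be al -> exists g, lt be g /\ lt g al)) as [Hl|Hl].
  - right; split; assumption.
  - left. apply not_all_ex_not in Hl as [be Hl].
    apply imply_to_and in Hl as [Hbe Hno].
    exists be; split; [exact Hbe|]. intros g Hg Hbg; apply Hno; eauto.
Qed.

Hypothesis wf : well_founded lt.
Hypothesis Hto : strict_total_order lt.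

Lemma well_founded_minimal (P : O -> Prop) (x : O) :
  P x -> exists m, P m /\ forall y, lt y m -> ~ P y.
Proof.
  induction x as [x IH] using (well_founded_ind wf). intros Px.
  destruct (classic (exists y, lt y x /\ P y)) as [[y [Hy Py]]|Hno].
  - exact (IH y Hy Py).
  - exists x; split; [exact Px|]. intros y Hy Py; apply Hno; eauto.
Qed.

(* The successor of [be] is the least element above it. *)
Lemma exists_succ_le (be ga : O) :
  lt be ga -> exists s, is_pred be s /\ (s = ga \/ lt s ga).
Proof.
  destruct Hto as [_ [_ Htot]]. intros Hbe.
  destruct (well_founded_minimal (lt be) ga Hbe) as [s [Hs Hmin]].
  exists s; split.
  - split; [exact Hs|]. intros g Hg Hbg; exact (Hmin g Hg Hbg).
  - destruct (Htot s ga) as [Hlt|[Heq|Hlt]]; [right; exact Hlt|left; exact Heq|].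
    exfalso; exact (Hmin ga Hlt Hbe).
Qed.

End Ordinals.

Lemma partial_iso_snoc_inv {C : Type} {dC : C -> C -> R} {A B : list C} {c d : C} :
  partial_iso dC (A ++ [c]) (B ++ [d]) -> partial_iso dC A B.
Proof.
  intros [Hlen H]. rewrite !length_app in Hlen; simpl in Hlen.
  split; [lia|].
  intros i j ai aj bi bj H1 H2 H3 H4.
  apply (H i j); apply nth_error_app_some_l; assumption.
Qed.

Lemma partial_iso_dist {C : Type} {dC : C -> C -> R} {X Y : list C} (i j : nat)
  {x x' y y' : C} :
  (forall u v, 0 <= dC u v) -> partial_iso dC X Y ->
  nth_error X i = Some x -> nth_error X j = Some x' ->
  nth_error Y i = Some y -> nth_error Y j = Some y' -> dC x x' = dC y y'.
Proof.
  intros Hnn [_ Hiso] Hx Hx' Hy Hy'. apply Req_of_Q2R_upper_bounds; try apply Hnn.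
  intros q Hq. exact (proj1 (proj2 (Hiso i j x x' y y' Hx Hx' Hy Hy') q Hq)).
Qed.

Section BackAndForth.
Variables (C : Type) (dC : C -> C -> R) (O : Type) (lt : O -> O -> Prop).
Hypothesis wf : well_founded lt.
Hypothesis Hto : strict_total_order lt.

Local Notation bf al := (bf_rel dC wf al).

Lemma bf_rel_unfold (al : O) (A B : list C) :
  bf al A B <-> bf_step dC lt al (fun be _ => bf be) A B.
Proof.
  unfold bf_rel at 1. rewrite Fix_eq; [reflexivity|].
  intros x F G HFG.
  replace G with F; [reflexivity|].
  apply functional_extensionality_dep; intro y.
  apply functional_extensionality_dep; intro p. apply HFG.
Qed.

Lemma bf_rel_zero (al : O) (A B : list C) :
  is_zero lt al -> (bf al A B <-> partial_iso dC A B).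
Proof.
  intros Hz. rewrite bf_rel_unfold. split.
  - intros [H _]; exact (H Hz).
  - intros H; split; [|split].
    + intros _; exact H.
    + intros be Hbe; exfalso; exact (Hz be Hbe).
    + intros [be Hbe]; exfalso; exact (Hz be Hbe).
Qed.

Lemma bf_rel_succ (al be : O) (A B : list C) :
  is_pred lt be al -> (bf al A B <-> back_forth (bf be) A B).
Proof.
  destruct Hto as [_ [_ Htot]]. intros [Hbe Hsucc]. rewrite bf_rel_unfold. split.
  - intros [_ [H _]]. exact (H be Hbe Hsucc).
  - intros H; split; [|split].
    + intros Hz; exfalso; exact (Hz be Hbe).
    + intros be' Hbe' Hsucc'.
      destruct (Htot be be') as [Hlt|[<-|Hlt]].
      * exfalso; exact (Hsucc be' Hbe' Hlt).
      * exact H.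
      * exfalso; exact (Hsucc' be Hbe Hlt).
    + intros _ Hlim. exfalso.
      destruct (Hlim be Hbe) as [g [Hbg Hg]]. exact (Hsucc g Hg Hbg).
Qed.

Lemma bf_rel_limit (al : O) (A B : list C) :
  is_limit lt al -> (bf al A B <-> forall be, lt be al -> bf be A B).
Proof.
  intros [Hex Hlim]. rewrite bf_rel_unfold. split.
  - intros [_ [_ H]]. exact (H Hex Hlim).
  - intros H; split; [|split].
    + intros Hz; exfalso; destruct Hex as [be Hbe]; exact (Hz be Hbe).
    + intros be Hbe Hsucc. exfalso.
      destruct (Hlim be Hbe) as [g [Hbg Hg]]. exact (Hsucc g Hg Hbg).
    + intros _ _ be Hbe; exact (H be Hbe).
Qed.

Hypothesis C_inhabited : inhabited C.

(* The inner induction on [be] handles a limit [be] below a successor [al]. *)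
Lemma bf_rel_anti (al be : O) (A B : list C) : lt be al -> bf al A B -> bf be A B.
Proof.
  destruct Hto as [Htr [_ Htot]].
  revert be A B. induction al as [al IHal] using (well_founded_ind wf).
  intros be. induction be as [be IHbe] using (well_founded_ind wf).
  intros A B Hbe Hal.
  destruct (ordinal_cases lt al) as [Hz|[[g Hg]|Hlim]].
  - exfalso; exact (Hz be Hbe).
  - rewrite (bf_rel_succ A B Hg) in Hal.
    assert (Hbg : be = g \/ lt be g).
    { destruct Hg as [_ Hsucc]. destruct (Htot be g) as [Hlt|[Heq|Hlt]]; auto.
      exfalso; exact (Hsucc be Hbe Hlt). }
    assert (Hdown : forall X Y, bf g X Y -> bf be X Y).
    { intros X Y HX. destruct Hbg as [<-|Hlt]; [exact HX|].
      exact (IHal g (proj1 Hg) be X Y Hlt HX). }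
    destruct (ordinal_cases lt be) as [Hzb|[[d Hd]|Hlimb]].
    + (* extend by an arbitrary point, then restrict back *)
      destruct C_inhabited as [c0].
      destruct (proj1 Hal c0) as [d Hd]. apply Hdown in Hd.
      rewrite (bf_rel_zero _ _ Hzb) in Hd. rewrite (bf_rel_zero _ _ Hzb).
      exact (partial_iso_snoc_inv Hd).
    + rewrite (bf_rel_succ A B Hd).
      assert (Hdg : lt d g).
      { destruct Hbg as [<-|Hlt]; [exact (proj1 Hd)|exact (Htr _ _ _ (proj1 Hd) Hlt)]. }
      destruct Hal as [Hforth Hback]. split.
      * intro c. destruct (Hforth c) as [x Hx]. exists x. exact (IHal g (proj1 Hg) d _ _ Hdg Hx).
      * intro x. destruct (Hback x) as [c Hc]. exists c. exact (IHal g (proj1 Hg) d _ _ Hdg Hc).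
    + rewrite (bf_rel_limit A B Hlimb).
      intros d Hd. apply (IHbe d Hd); [exact (Htr _ _ _ Hd Hbe)|].
      rewrite (bf_rel_succ A B Hg). exact Hal.
  - rewrite (bf_rel_limit A B Hlim) in Hal. exact (Hal be Hbe).
Qed.

Lemma bf_rel_back_forth (ga be : O) (A B : list C) :
  bf ga A B -> lt be ga -> back_forth (bf be) A B.
Proof.
  intros Hga Hbe.
  destruct (exists_succ_le wf Hto be ga Hbe) as [s [Hs Hsga]].
  rewrite <- (bf_rel_succ A B Hs).
  destruct Hsga as [->|Hlt]; [exact Hga|exact (bf_rel_anti A B Hlt Hga)].
Qed.

End BackAndForth.

Lemma complete_play_cons (O : Type) (lt : O -> O -> Prop) (al : O) (m : O * nat)
  (r : list (O * nat)) :
  complete_play lt al (m :: r) ->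
  lt (fst m) al /\
  match r with nil => is_zero lt (fst m) | _ => complete_play lt (fst m) r end.
Proof.
  intros [_ [Hhd [Hdec Hlast]]]. split; [apply Hhd; reflexivity|].
  destruct r as [|m' r'].
  - apply Hlast. reflexivity.
  - split; [discriminate|split; [|split]].
    + intros g Hg. injection Hg as <-. apply (Hdec 0%nat); reflexivity.
    + intros i g g' H1 H2. exact (Hdec (S i) g g' H1 H2).
    + intros g Hg. apply Hlast. simpl in Hg |- *. rewrite Nat.sub_0_r in Hg. exact Hg.
Qed.

Section ShadowStrategy.
Variables (C : Type) (dC : C -> C -> R) (e : nat -> C) (O : Type) (lt : O -> O -> Prop).
Hypothesis wf : well_founded lt.
Hypothesis Hto : strict_total_order lt.
Hypothesis Hmetric : is_metric dC.
Hypothesis Hdense : forall x eps, 0 < eps -> exists n, dC x (e n) < eps.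
Variable f : nat -> Q.
Hypothesis Hf : forall n, (0 < f n)%Q.
Variables a b : list C.
Hypothesis Hab : length a = length b.

Local Notation bf al := (bf_rel dC wf al).

Definition approx_index (x : C) (q : Q) : nat :=
  epsilon (inhabits 0%nat) (fun n => dC x (e n) < Q2R q).

Definition extend_right (be : O) (A B : list C) (c : C) : C :=
  epsilon (inhabits (e 0%nat)) (fun d => bf be (A ++ [c]) (B ++ [d])).

Definition extend_left (be : O) (A B : list C) (d : C) : C :=
  epsilon (inhabits (e 0%nat)) (fun c => bf be (A ++ [c]) (B ++ [d])).

Definition shadow_pair (sh : list (C * C)) (m : O * nat) : C * C :=
  let A := a ++ map fst sh in
  let B := b ++ map snd sh in
  if Nat.even (length sh) then (e (snd m), extend_right (fst m) A B (e (snd m)))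
  else (extend_left (fst m) A B (e (snd m)), e (snd m)).

Definition shadow_step (sh : list (C * C)) (m : O * nat) : list (C * C) :=
  sh ++ [shadow_pair sh m].

Definition shadows (ms : list (O * nat)) : list (C * C) := fold_left shadow_step ms [].

Definition shadow_strategy (pre : list (O * nat)) (m : O * nat) : nat :=
  let sh := shadows pre in
  let p := shadow_pair sh m in
  approx_index (if Nat.even (length sh) then snd p else fst p) (f (length sh)).

Lemma approx_index_spec (x : C) (q : Q) : (0 < q)%Q -> dC x (e (approx_index x q)) < Q2R q.
Proof. intro Hq. unfold approx_index. apply epsilon_spec, Hdense, Q2R_pos, Hq. Qed.

Lemma shadows_snoc (pre : list (O * nat)) (m : O * nat) :
  shadows (pre ++ [m]) = shadows pre ++ [shadow_pair (shadows pre) m].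
Proof. unfold shadows. rewrite fold_left_app. reflexivity. Qed.

Lemma shadows_length (pre : list (O * nat)) : length (shadows pre) = length pre.
Proof.
  induction pre as [|m pre IH] using rev_ind; [reflexivity|].
  rewrite shadows_snoc, !length_app, IH. reflexivity.
Qed.

Lemma shadows_prefix (pre rest : list (O * nat)) (k : nat) (p : C * C) :
  nth_error (shadows pre) k = Some p -> nth_error (shadows (pre ++ rest)) k = Some p.
Proof.
  induction rest as [|m rest IH] using rev_ind; intro Hk; [rewrite app_nil_r; exact Hk|].
  rewrite app_assoc, shadows_snoc. exact (nth_error_app_some_l _ (IH Hk)).
Qed.

Lemma shadow_response_close (pre : list (O * nat)) (m : O * nat) (c d : nat) :
  (if Nat.even (length pre) then (snd m, shadow_strategy pre m)
   else (shadow_strategy pre m, snd m)) = (c, d) ->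
  let p := shadow_pair (shadows pre) m in
  dC (fst p) (e c) + dC (snd p) (e d) < Q2R (f (length pre)).
Proof.
  destruct Hmetric as [_ [Hzero _]].
  assert (Hself : forall x, dC x x = 0) by (intro x; apply Hzero; reflexivity).
  unfold shadow_strategy, shadow_pair. rewrite shadows_length.
  destruct (Nat.even (length pre)); intros Hcd; injection Hcd as <- <-; simpl;
    rewrite Hself; [rewrite Rplus_0_l | rewrite Rplus_0_r]; apply approx_index_spec, Hf.
Qed.

Lemma shadow_play_close (rest pre : list (O * nat)) (j c d : nat) :
  nth_error (cd_aux shadow_strategy pre rest (length pre)) j = Some (c, d) ->
  exists p, nth_error (shadows (pre ++ rest)) (length pre + j) = Some p /\
    dC (fst p) (e c) + dC (snd p) (e d) < Q2R (f (length pre + j)).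
Proof.
  revert pre j. induction rest as [|m r IH]; intros pre j Hj; [destruct j; discriminate|].
  replace (pre ++ m :: r) with ((pre ++ [m]) ++ r) by (rewrite <- app_assoc; reflexivity).
  destruct j as [|j]; simpl in Hj.
  - injection Hj as Hcd. exists (shadow_pair (shadows pre) m). split.
    + apply shadows_prefix. rewrite shadows_snoc, Nat.add_0_r, <- (shadows_length pre).
      rewrite nth_error_app2, Nat.sub_diag by lia. reflexivity.
    + rewrite Nat.add_0_r. exact (shadow_response_close _ _ Hcd).
  - replace (S (length pre)) with (length (pre ++ [m])) in Hj
      by (rewrite length_app; simpl; lia).
    destruct (IH _ _ Hj) as [p Hp]. exists p.
    replace (length pre + S j)%nat with (length (pre ++ [m]) + j)%nat
      by (rewrite length_app; simpl; lia).
    exact Hp.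
Qed.

Lemma shadow_pair_bf_rel (g : O) (sh : list (C * C)) (m : O * nat) :
  bf g (a ++ map fst sh) (b ++ map snd sh) -> lt (fst m) g ->
  bf (fst m) (a ++ map fst (shadow_step sh m)) (b ++ map snd (shadow_step sh m)).
Proof.
  intros Hg Hlt. unfold shadow_step. rewrite !map_app, !app_assoc.
  destruct (bf_rel_back_forth dC wf Hto (inhabits (e 0%nat)) _ _ _ _ Hg Hlt)
    as [Hforth Hback].
  unfold shadow_pair, extend_right, extend_left.
  destruct (Nat.even (length sh)); simpl; apply epsilon_spec; [apply Hforth | apply Hback].
Qed.

Lemma shadows_partial_iso (rest pre : list (O * nat)) (g : O) :
  bf g (a ++ map fst (shadows pre)) (b ++ map snd (shadows pre)) ->
  complete_play lt g rest ->
  partial_iso dC (a ++ map fst (shadows (pre ++ rest))) (b ++ map snd (shadows (pre ++ rest))).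
Proof.
  revert pre g. induction rest as [|m r IH]; intros pre g Hg Hplay.
  { exfalso. apply (proj1 Hplay). reflexivity. }
  apply complete_play_cons in Hplay as [Hlt Hr].
  pose proof (shadow_pair_bf_rel _ _ Hg Hlt) as Hm.
  unfold shadow_step in Hm. rewrite <- shadows_snoc in Hm.
  replace (pre ++ m :: r) with ((pre ++ [m]) ++ r) by (rewrite <- app_assoc; reflexivity).
  destruct r as [|m' r'].
  - rewrite app_nil_r. exact (proj1 (bf_rel_zero dC wf _ _ Hr) Hm).
  - exact (IH _ _ Hm Hr).
Qed.

Lemma bf_rel_sim_f (al : O) : bf al a b -> sim_f dC lt e f al a b.
Proof.
  intros Hbf. exists shadow_strategy. intros ms Hplay.
  set (S := shadows ms).
  assert (Hiso : partial_iso dC (a ++ map fst S) (b ++ map snd S)).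
  { apply (shadows_partial_iso (rest := ms) [] (g := al)); [|exact Hplay].
    simpl. rewrite !app_nil_r. exact Hbf. }
  assert (Hclose : forall j c d, nth_error (cd_of shadow_strategy ms) j = Some (c, d) ->
    exists p, nth_error S j = Some p /\ dC (fst p) (e c) + dC (snd p) (e d) < Q2R (f j))
    by exact (fun j c d Hj => shadow_play_close ms [] j Hj).
  pose proof Hmetric as [Hnn [Hzero _]].
  assert (Hself : forall x, dC x x = 0) by (intro x; apply Hzero; reflexivity).
  split.
  - intros i j ai bi c d Hai Hbi Hj.
    destruct (Hclose j c d Hj) as [[cs ds] [Hp Hcs]]; simpl in Hcs.
    assert (Hdist : dC ai cs = dC bi ds).
    { apply (partial_iso_dist i (length a + j) Hnn Hiso);
        [apply nth_error_app_some_l; exact Hai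
        | exact (nth_error_app_map_shift a fst Hp)
        | apply nth_error_app_some_l; exact Hbi
        | rewrite Hab; exact (nth_error_app_map_shift b snd Hp)]. }
    pose proof (metric_dist_transfer Hmetric ai (e c) bi (e d) Hdist).
    rewrite !Hself in *. lra.
  - intros i j ci di cj dj Hi Hj.
    destruct (Hclose i ci di Hi) as [[cs1 ds1] [Hp1 Hcs1]].
    destruct (Hclose j cj dj Hj) as [[cs2 ds2] [Hp2 Hcs2]]; simpl in Hcs1, Hcs2.
    assert (Hdist : dC cs1 cs2 = dC ds1 ds2).
    { apply (partial_iso_dist (length a + i) (length a + j) Hnn Hiso);
        [exact (nth_error_app_map_shift a fst Hp1)
        | exact (nth_error_app_map_shift a fst Hp2)
        | rewrite Hab; exact (nth_error_app_map_shift b snd Hp1)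
        | rewrite Hab; exact (nth_error_app_map_shift b snd Hp2)]. }
    pose proof (metric_dist_transfer Hmetric (e ci) (e cj) (e di) (e dj) Hdist).
    lra.
Qed.

End ShadowStrategy.

Lemma least_opt_mono (O : Type) (lt : O -> O -> Prop) (P Q : O -> Prop) (m1 m2 : option O) :
  (forall mu, Q mu -> P mu) -> least_opt lt P m1 -> least_opt lt Q m2 -> ole_opt lt m1 m2.
Proof.
  intros HQP H1 H2. destruct m2 as [y|]; [|destruct m1; exact I].
  destruct H2 as [Hy _]. apply HQP in Hy.
  destruct m1 as [x|]; simpl in *.
  - exact (proj2 H1 y Hy).
  - exact (H1 y Hy).
Qed.

Theorem fact4p3
  (d : nat -> nat -> R) (HM : is_metric d)
  (C : Type) (dC : C -> C -> R) (e : nat -> C) (HC : is_completion d dC e)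
  (a b : list C) (Hab : length a = length b)
  (O : Type) (lt : O -> O -> Prop) (wf : well_founded lt) (Hto : strict_total_order lt) :
  (forall (al : O) (f : nat -> Q), REC f ->
     bf_rel dC wf al a b -> sim_f dC lt e f al a b) /\
  (forall m1 m2 : option O, SR_is dC wf a b m1 -> R_is dC e lt a b m2 -> ole_opt lt m1 m2).
Proof.
  destruct HC as [Hmetric [_ [Hdense _]]].
  assert (Hsim : forall (al : O) (f : nat -> Q), REC f ->
            bf_rel dC wf al a b -> sim_f dC lt e f al a b).
  { intros al f [_ [Hf _]]. exact (bf_rel_sim_f e wf Hto Hmetric Hdense f Hf a b Hab al). }
  split; [exact Hsim|].
  intros m1 m2. apply least_opt_mono.
  intros mu [f [Hf Hnot]] Hbf. exact (Hnot (Hsim mu f Hf Hbf)).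
Qed.
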